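(* Let $0<t_0\le1/2$. For every integer $k\ge0$, every $t\in[t_0,1]$, every integer $0\le j\le 2k$ and all $(m_1,\eta_1)\in\mathbb Z\times\mathbb R$, $$|\partial_{\eta_1}^j\rho_k|\le 8^j\frac{(2k)!}{(2k-j)!}\rho_{k-\frac j2}.$$
   Context: For $\sigma\ge0$ and $t\in[t_0,1]$, $\rho_\sigma(m_1,\eta_1)=\big((t-t_0)\eta_1^2+(t-t_0)^2m_1\eta_1+\frac{(t-t_0)^3}{3}m_1^2\big)^\sigma$ (the base is nonnegative), with the convention $\rho_0=1$. *)

From Stdlib Require Import Reals Lra Arith Factorial.
From Coquelicot Require Import Coquelicot.
Open Scope R_scope.

Definition rho_base (t0 t m eta : R) : R :=
  (t - t0) * eta ^ 2 + (t - t0) ^ 2 * m * eta + (t - t0) ^ 3 / 3 * m ^ 2.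

(* Real power x^s for x >= 0, with the conventions x^0 = 1 (in particular
   0^0 = 1, i.e. rho_0 = 1) and 0^s = 0 for s <> 0. *)
Definition rpow (x s : R) : R :=
  if Req_EM_T s 0 then 1 else if Req_EM_T x 0 then 0 else Rpower x s.

Definition rho (t0 t sigma m eta : R) : R := rpow (rho_base t0 t m eta) sigma.

From Stdlib Require Import Reals Lra Lia Factorial.
From Coquelicot Require Import Coquelicot.
Open Scope R_scope.

(* With P := rho_base we have rho_k = P^k.  As P is quadratic in eta, Leibniz'
   rule for P * P^k has only three terms, and the bounds P'^2 <= 4 P (valid
   because t - t0 <= 1) and |P''| <= 2 let each of them be dominated by the
   corresponding term for the model P = y^2 evaluated at y = sqrt P, where
   equality holds.  By induction on k, |d^j P^k| is thus at most d^j y^(2k)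
   at y = sqrt P, that is (2k)!/(2k-j)! P^(k - j/2). *)

Definition smooth (g : R -> R) : Prop := forall n x, ex_derive_n g n x.

Section QuadraticFactor.

Variables (f f' : R -> R) (c : R).
Hypothesis f_derive : forall x, is_derive f x (f' x).
Hypothesis f'_derive : forall x, is_derive f' x c.

(* For n = 0, 1 the indices n - 1 and n - 2 truncate, but their coefficients vanish. *)
Lemma Derive_n_mult_quadratic (g : R -> R) (n : nat) (x : R) : smooth g ->
  Derive_n (fun y => f y * g y) n x =
  f x * Derive_n g n x + INR n * f' x * Derive_n g (n - 1) x
  + INR n * (INR n - 1) / 2 * c * Derive_n g (n - 2) x.
Proof.
intros Hg. revert x; induction n as [|n IH]; intros x.
- simpl. lra.
- change (Derive_n ?h (S n) x) with (Derive (Derive_n h n) x).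
  rewrite (Derive_ext _ _ x IH).
  assert (HG : forall i, is_derive (Derive_n g i) x (Derive_n g (S i) x))
    by (intros i; apply Derive_correct, (Hg (S i))).
  set (K := INR n * (INR n - 1) / 2).
  assert (HE : is_derive (fun y => f y * Derive_n g n y + INR n * f' y * Derive_n g (n - 1) y
                                   + K * c * Derive_n g (n - 2) y) x
     (f' x * Derive_n g n x + f x * Derive_n g (S n) x
      + (INR n * c * Derive_n g (n - 1) x + INR n * f' x * Derive_n g (S (n - 1)) x)
      + K * c * Derive_n g (S (n - 2)) x)).
  { apply (is_derive_plus (fun y => f y * Derive_n g n y + INR n * f' y * Derive_n g (n - 1) y)
                          (fun y => K * c * Derive_n g (n - 2) y)).
    - apply (is_derive_plus (fun y => f y * Derive_n g n y)
                            (fun y => INR n * f' y * Derive_n g (n - 1) y)).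
      + apply (is_derive_mult f); auto. intros; apply Rmult_comm.
      + apply (is_derive_mult (fun y => INR n * f' y)); auto.
        * apply is_derive_scal; auto.
        * intros; apply Rmult_comm.
    - apply (is_derive_scal (Derive_n g (n - 2))); auto. }
  apply (eq_trans (is_derive_unique _ _ _ HE)). unfold K.
  destruct n as [|[|n]]; rewrite ?S_INR; cbn [Nat.sub INR]; rewrite ?Nat.sub_0_r.
  all: change (Derive (Derive_n g ?i) x) with (Derive_n g (S i) x); field.
Qed.

Lemma smooth_mult_quadratic (g : R -> R) : smooth g -> smooth (fun y => f y * g y).
Proof.
intros Hg [|n] x; [exact I|].
assert (HG : forall i, ex_derive (Derive_n g i) x) by (intros i; apply (Hg (S i))).
assert (Hfx : ex_derive f x) by (eexists; apply f_derive).
assert (Hf'x : ex_derive f' x) by (eexists; apply f'_derive).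
apply (ex_derive_ext (fun y => f y * Derive_n g n y + INR n * f' y * Derive_n g (n - 1) y
                               + INR n * (INR n - 1) / 2 * c * Derive_n g (n - 2) y)).
{ intros y; symmetry; apply Derive_n_mult_quadratic; auto. }
apply (ex_derive_plus (fun y => f y * Derive_n g n y + INR n * f' y * Derive_n g (n - 1) y)).
- apply (ex_derive_plus (fun y => f y * Derive_n g n y)).
  + apply (ex_derive_mult f); [exact Hfx | apply HG].
  + apply (ex_derive_mult (fun y => INR n * f' y)); [apply ex_derive_scal, Hf'x | apply HG].
- apply ex_derive_scal, HG.
Qed.

Lemma smooth_pow_quadratic (k : nat) : smooth (fun y => f y ^ k).
Proof.
induction k as [|k IH].
- intros n x; exact (ex_derive_n_const 1 n x).
- exact (smooth_mult_quadratic (fun y => f y ^ k) IH).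
Qed.

End QuadraticFactor.

Lemma Derive_n_pow_SS (p j : nat) (x : R) :
  Derive_n (fun y => y ^ S (S p)) j x =
  x ^ 2 * Derive_n (fun y => y ^ p) j x + INR j * (2 * x) * Derive_n (fun y => y ^ p) (j - 1) x
  + INR j * (INR j - 1) / 2 * 2 * Derive_n (fun y => y ^ p) (j - 2) x.
Proof.
rewrite (Derive_n_ext _ (fun y => y ^ 2 * y ^ p)) by (intros; simpl; ring).
apply (Derive_n_mult_quadratic (fun y => y ^ 2) (fun y => 2 * y)).
- intros y. auto_derive; [exact I|]. ring.
- intros y. auto_derive; [exact I|]. ring.
- intros n y; apply ex_derive_n_pow.
Qed.

Lemma Rabs_scal_mult_le (a b b' d d' : R) :
  0 <= a -> Rabs b <= b' -> Rabs d <= d' -> Rabs (a * b * d) <= a * b' * d'.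
Proof.
intros Ha Hb Hd. rewrite !Rabs_mult, (Rabs_pos_eq a) by exact Ha.
apply Rmult_le_compat; [apply Rmult_le_pos; [exact Ha | apply Rabs_pos] | apply Rabs_pos | |exact Hd].
apply Rmult_le_compat_l; assumption.
Qed.

Lemma INR_mul_pred_half_nonneg (n : nat) : 0 <= INR n * (INR n - 1) / 2.
Proof. destruct n as [|n]; [simpl; lra|]. rewrite S_INR. pose proof (pos_INR n). nra. Qed.

Lemma Derive_n_pow_quadratic_bound (f f' : R -> R) (c x : R) :
  (forall y, is_derive f y (f' y)) -> (forall y, is_derive f' y c) ->
  f' x ^ 2 <= 4 * f x -> Rabs c <= 2 ->
  forall k j, Rabs (Derive_n (fun y => f y ^ k) j x)
              <= Derive_n (fun y => y ^ (2 * k)) j (sqrt (f x)).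
Proof.
intros Hf Hf' Hsq Hc.
set (s := sqrt (f x)).
assert (Hs : 0 <= s) by apply sqrt_pos.
assert (Hs2 : f x = s ^ 2).
{ unfold s. simpl. rewrite Rmult_1_r, sqrt_sqrt; [reflexivity|]. nra. }
assert (Hf's : Rabs (f' x) <= 2 * s).
{ rewrite <- (Rabs_pos_eq (2 * s)) by lra. apply Rsqr_le_abs_0. unfold Rsqr. nra. }
induction k as [|k IH]; intros j.
- change (fun y => f y ^ 0) with (fun _ : R => 1).
  change (fun y : R => y ^ (2 * 0)) with (fun _ : R => 1).
  destruct j as [|j]; [simpl; rewrite Rabs_R1; lra|].
  rewrite !Derive_n_const, Rabs_R0. lra.
- change (fun y => f y ^ S k) with (fun y => f y * f y ^ k).
  rewrite (Derive_n_mult_quadratic f f' c Hf Hf') by apply (smooth_pow_quadratic f f' c Hf Hf').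
  replace (2 * S k)%nat with (S (S (2 * k))) by lia.
  rewrite Derive_n_pow_SS, Hs2.
  eapply Rle_trans; [apply Rabs_triang|].
  apply Rplus_le_compat; [eapply Rle_trans; [apply Rabs_triang|]; apply Rplus_le_compat|].
  + rewrite Rabs_mult, (Rabs_pos_eq (s ^ 2)) by (apply pow_le; lra).
    apply Rmult_le_compat_l; [apply pow_le; lra | apply IH].
  + apply Rabs_scal_mult_le; [apply pos_INR | exact Hf's | apply IH].
  + apply Rabs_scal_mult_le; [apply INR_mul_pred_half_nonneg | exact Hc | apply IH].
Qed.

Lemma rpow_half_INR (x : R) (n : nat) : 0 <= x -> rpow x (INR n / 2) = sqrt x ^ n.
Proof.
intros Hx. unfold rpow.
destruct (Req_EM_T (INR n / 2) 0) as [E|E].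
- replace n with 0%nat by (apply (INR_eq 0); simpl; lra). reflexivity.
- assert (Hn : n <> 0%nat) by (intros ->; simpl in E; lra).
  destruct (Req_EM_T x 0) as [->|Hx0].
  + rewrite sqrt_0, pow_i by lia. reflexivity.
  + rewrite <- Rpower_pow by (apply sqrt_lt_R0; lra).
    rewrite <- Rpower_sqrt, Rpower_mult by lra.
    f_equal. field.
Qed.

Lemma rpow_INR (x : R) (k : nat) : 0 <= x -> rpow x (INR k) = x ^ k.
Proof.
intros Hx.
replace (INR k) with (INR (2 * k) / 2) by (rewrite mult_INR; simpl; field).
rewrite rpow_half_INR, pow_mult, pow2_sqrt by exact Hx. reflexivity.
Qed.

Lemma rho_base_nonneg (t0 t m eta : R) : t0 <= t -> 0 <= rho_base t0 t m eta.
Proof.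
intros Ht. unfold rho_base.
assert (E : (t - t0) * eta ^ 2 + (t - t0) ^ 2 * m * eta + (t - t0) ^ 3 / 3 * m ^ 2
            = (t - t0) * (eta + (t - t0) * m / 2) ^ 2 + (t - t0) ^ 3 * m ^ 2 / 12) by field.
rewrite E.
assert (0 <= (t - t0) * (eta + (t - t0) * m / 2) ^ 2) by (apply Rmult_le_pos; [lra | apply pow2_ge_0]).
assert (0 <= (t - t0) ^ 3 * m ^ 2) by (apply Rmult_le_pos; [apply pow_le; lra | apply pow2_ge_0]).
lra.
Qed.

Lemma rho_base_derive (t0 t m eta : R) :
  is_derive (rho_base t0 t m) eta (2 * (t - t0) * eta + (t - t0) ^ 2 * m).
Proof. unfold rho_base. auto_derive; [exact I|]. ring. Qed.

Lemma rho_base_derive_sq_le (t0 t m eta : R) : t0 <= t <= t0 + 1 ->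
  (2 * (t - t0) * eta + (t - t0) ^ 2 * m) ^ 2 <= 4 * rho_base t0 t m eta.
Proof.
intros Ht.
assert (E : 4 * (t - t0) * rho_base t0 t m eta - (2 * (t - t0) * eta + (t - t0) ^ 2 * m) ^ 2
            = (t - t0) ^ 4 * m ^ 2 / 3) by (unfold rho_base; field).
assert (0 <= (t - t0) ^ 4 * m ^ 2) by (apply Rmult_le_pos; [apply pow_le; lra | apply pow2_ge_0]).
pose proof (rho_base_nonneg t0 t m eta ltac:(lra)).
nra.
Qed.

Theorem lemma4p1 (t0 : R) (Ht0 : 0 < t0 <= 1 / 2) :
  forall (k : nat) (t : R), t0 <= t <= 1 ->
  forall (j : nat), (j <= 2 * k)%nat ->
  forall (m1 : Z) (eta1 : R),
    Rabs (Derive_n (fun eta => rho t0 t (INR k) (IZR m1) eta) j eta1)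
    <= 8 ^ j * (INR (fact (2 * k)) / INR (fact (2 * k - j)))
       * rho t0 t (INR k - INR j / 2) (IZR m1) eta1.
Proof.
intros k t Ht j Hj m1 eta1. unfold rho.
set (m := IZR m1).
rewrite (Derive_n_ext _ (fun eta => rho_base t0 t m eta ^ k))
  by (intros; apply rpow_INR, rho_base_nonneg; lra).
replace (INR k - INR j / 2) with (INR (2 * k - j) / 2)
  by (rewrite minus_INR, mult_INR by exact Hj; simpl; field).
rewrite rpow_half_INR by (apply rho_base_nonneg; lra).
eapply Rle_trans.
{ apply (Derive_n_pow_quadratic_bound _ (fun eta => 2 * (t - t0) * eta + (t - t0) ^ 2 * m)
                                      (2 * (t - t0))).
  - intros eta. apply rho_base_derive.
  - intros eta. auto_derive; [exact I|]. ring.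
  - apply rho_base_derive_sq_le. lra.
  - rewrite Rabs_pos_eq; lra. }
rewrite Derive_n_pow_smalli by exact Hj.
assert (H8 : 1 <= 8 ^ j) by (apply pow_R1_Rle; lra).
assert (0 <= INR (fact (2 * k)) / INR (fact (2 * k - j)) * sqrt (rho_base t0 t m eta1) ^ (2 * k - j)).
{ apply Rmult_le_pos; [apply Rdiv_le_0_compat; [apply pos_INR | apply INR_fact_lt_0]|].
  apply pow_le, sqrt_pos. }
nra.
Qed.
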